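(* Let $\{a_k\}_{k\ge1}$ be a sequence of positive numbers and, for each $N\ge2$, let $T_N$ be the number of i.i.d. draws needed to observe all $N$ types when type $k\in\{1,\dots,N\}$ has probability $a_k/\sum_{i=1}^N a_i$. Then the sequence $\{T_N\}_{N\ge2}$ is stochastically increasing: $P(T_{N+1}\ge k)\ge P(T_N\ge k)$ for all integers $k$ and all $N\ge2$. *)

From HB Require Import structures.
From mathcomp Require Import all_boot all_order all_algebra.
Set Implicit Arguments. Unset Strict Implicit. Unset Printing Implicit Defensive.
Import Order.TTheory GRing.Theory Num.Theory.
Local Open Scope ring_scope.

(* Type k ∈ {1..N} is represented by i : 'I_N with k = i+1; weights a : nat -> R,
   with a 0 unused. Probability of type i among N types. *)
Definition type_prob (R : realFieldType) (a : nat -> R) (N : nat) (i : 'I_N) : R :=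
  a i.+1 / \sum_(j < N) a j.+1.

(* Probability that the first m i.i.d. draws (an outcome is f : 'I_m -> 'I_N,
   of probability prod_t p(f t)) do NOT contain all N types, i.e. P(T_N > m). *)
Definition not_covered_prob (R : realFieldType) (a : nat -> R) (N m : nat) : R :=
  \sum_(f : {ffun 'I_m -> 'I_N} | ~~ [forall j : 'I_N, j \in codom f])
     \prod_(t < m) type_prob a (f t).

(* P(T_N >= k) = P(T_N > k-1); for k = 0 this is 1 (when N >= 2). *)
Definition coupon_ge (R : realFieldType) (a : nat -> R) (N k : nat) : R :=
  not_covered_prob a N k.-1.

From HB Require Import structures.
From mathcomp Require Import all_boot all_order all_algebra.
Import Order.TTheory GRing.Theory Num.Theory.
Set Implicit Arguments. Unset Strict Implicit. Unset Printing Implicit Defensive.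
Local Open Scope ring_scope.

(* Draw a sample u with N types and, independently, a sample v with
   N+1 types.  Wherever v shows one of the N old types, exchange the two draws.
   The joint weight a_i a_j / (S_N S_(N+1)) of a pair of old types is symmetric,
   so this involution preserves the product measure, and it maps every pair in
   which v covers all N+1 types to a pair in which u covers all N types: the
   old types of v move into u, and the new type was never in u anyway.  Hence
   P(v covers) <= P(u covers), i.e. P(T_(N+1) > m) >= P(T_N > m). *)

Lemma sum_mul_totalr (R : comPzSemiRingType) (I J : finType) (P : pred I)
    (F : I -> R) (G : J -> R) :
  \sum_j G j = 1 -> \sum_(i | P i) F i = \sum_(p : I * J | P p.1) F p.1 * G p.2.
Proof.
move=> G1; under eq_bigr do rewrite -[F _]mulr1 -G1 mulr_sumr.
by rewrite pair_big; apply: eq_bigl => p; rewrite andbT.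
Qed.

Lemma sum_mul_totall (R : comPzSemiRingType) (I J : finType) (Q : pred J)
    (F : I -> R) (G : J -> R) :
  \sum_i F i = 1 -> \sum_(j | Q j) G j = \sum_(p : I * J | Q p.2) F p.1 * G p.2.
Proof.
move=> F1; rewrite -[LHS]mul1r -F1 mulr_suml.
under eq_bigr do rewrite mulr_sumr.
by rewrite pair_big.
Qed.

Section Coupon.
Variables (R : realFieldType) (a : nat -> R).
Hypothesis a_gt0 : forall k : nat, (0 < k)%N -> 0 < a k.

Definition draw_prob N m (f : {ffun 'I_m -> 'I_N}) : R :=
  \prod_(t < m) type_prob a (f t).

Definition covers N m (f : {ffun 'I_m -> 'I_N}) := [forall j : 'I_N, j \in codom f].

Definition covered_prob N m : R := \sum_(f : {ffun 'I_m -> 'I_N} | covers f) draw_prob f.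

Lemma type_prob_ge0 N (i : 'I_N) : 0 <= type_prob a i.
Proof.
rewrite /type_prob divr_ge0 //; first by rewrite ltW ?a_gt0.
by apply: sumr_ge0 => j _; rewrite ltW ?a_gt0.
Qed.

Lemma draw_prob_ge0 N m (f : {ffun 'I_m -> 'I_N}) : 0 <= draw_prob f.
Proof. by apply: prodr_ge0 => t _; apply: type_prob_ge0. Qed.

Lemma sum_type_prob n : \sum_(i < n.+1) type_prob a i = 1.
Proof.
rewrite /type_prob -mulr_suml divff // lt0r_neq0 // big_ord_recl ltr_wpDr ?a_gt0 //.
by apply: sumr_ge0 => j _; rewrite ltW ?a_gt0.
Qed.

Lemma sum_draw_prob n m : \sum_(f : {ffun 'I_m -> 'I_n.+1}) draw_prob f = 1.
Proof.
rewrite -(bigA_distr_bigA (fun (t : 'I_m) (i : 'I_n.+1) => type_prob a i)) /=.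
by rewrite big1 // => t _; apply: sum_type_prob.
Qed.

Lemma not_covered_probE n m : not_covered_prob a n.+1 m = 1 - covered_prob n.+1 m.
Proof.
rewrite /covered_prob -(sum_draw_prob n m) (bigID (@covers n.+1 m)) /=.
by rewrite addrC addrK.
Qed.

(* Type [n.+1] of ['I_n.+2] is the new type, and
    [lift ord_max] embeds the old types ['I_n.+1] into ['I_n.+2]. *)

Variable n : nat.

Definition exchange_old (x : 'I_n.+1 * 'I_n.+2) : 'I_n.+1 * 'I_n.+2 :=
  if unlift ord_max x.2 is Some j then (j, lift ord_max x.1) else x.

Lemma exchange_oldK : involutive exchange_old.
Proof.
move=> [i j]; rewrite /exchange_old /=.
by case: (unliftP ord_max j) => [k ->|->]; rewrite ?liftK ?unlift_none.
Qed.

Lemma type_prob_exchange_old x :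
  type_prob a (exchange_old x).1 * type_prob a (exchange_old x).2 =
  type_prob a x.1 * type_prob a x.2.
Proof.
case: x => i j; rewrite /exchange_old /=.
case: (unliftP ord_max j) => [k ->|//] /=.
by rewrite /type_prob (lift_max i) (lift_max k) mulrACA [RHS]mulrACA [a k.+1 * _]mulrC.
Qed.

Variable m : nat.

Notation sample_pair := ({ffun 'I_m -> 'I_n.+1} * {ffun 'I_m -> 'I_n.+2})%type.

Definition exchange_samples (p : sample_pair) : sample_pair :=
  ([ffun t => (exchange_old (p.1 t, p.2 t)).1],
   [ffun t => (exchange_old (p.1 t, p.2 t)).2]).

Definition pair_prob (p : sample_pair) : R := draw_prob p.1 * draw_prob p.2.

Lemma exchange_samplesK : involutive exchange_samples.
Proof.
move=> [u v]; congr pair; apply/ffunP => t;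
  by rewrite !ffunE /= -surjective_pairing exchange_oldK.
Qed.

Lemma pair_prob_exchange p : pair_prob (exchange_samples p) = pair_prob p.
Proof.
rewrite /pair_prob /draw_prob -!big_split /=.
by apply: eq_bigr => t _; rewrite !ffunE type_prob_exchange_old.
Qed.

Lemma covers_exchange p : covers p.2 -> covers (exchange_samples p).1.
Proof.
move=> /forallP cov2; apply/forallP => i /=.
have /codomP [t vt] := cov2 (lift ord_max i).
by apply/codomP; exists t; rewrite ffunE /exchange_old /= -vt liftK.
Qed.

Lemma covered_prob_fst :
  covered_prob n.+1 m = \sum_(p : sample_pair | covers p.1) pair_prob p.
Proof. exact/sum_mul_totalr/sum_draw_prob. Qed.

Lemma covered_prob_snd :
  covered_prob n.+2 m = \sum_(p : sample_pair | covers p.2) pair_prob p.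
Proof. exact/sum_mul_totall/sum_draw_prob. Qed.

Lemma covered_prob_le : covered_prob n.+2 m <= covered_prob n.+1 m.
Proof.
rewrite covered_prob_snd covered_prob_fst.
rewrite [leRHS](reindex_inj (inv_inj exchange_samplesK)) /=.
under [leRHS]eq_bigr do rewrite pair_prob_exchange.
rewrite [leRHS](bigID (fun p : sample_pair => covers p.2)) /=.
rewrite (eq_bigl _ _ (fun p => andb_idl (@covers_exchange p))) lerDl.
by apply: sumr_ge0 => p _; apply: mulr_ge0; apply: draw_prob_ge0.
Qed.

End Coupon.

Theorem mainTheorem6 (R : realFieldType) (a : nat -> R)
    (ha : forall k : nat, (0 < k)%N -> 0 < a k) :
  forall (N k : nat), (2 <= N)%N -> coupon_ge a N k <= coupon_ge a N.+1 k.
Proof.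
move=> [|n] k // _; rewrite /coupon_ge !not_covered_probE // lerD2l lerN2.
exact: covered_prob_le.
Qed.
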